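(* Let $G$ be a connected graph on at least $3$ vertices and let $G'$ be obtained from $G$ by subdividing an edge $e$. Then $rx_3(G')\le rx_3(G)+1$.
   Context: Subdividing an edge $e=uw$ means deleting $e$, adding a new vertex $x$, and adding the edges $xu$ and $xw$. An edge coloring may give adjacent edges the same color; a tree is rainbow if its edges have pairwise distinct colors. For a connected graph on at least $3$ vertices, $rx_3$ is the minimum number of colors in an edge coloring such that every set of $3$ vertices lies in some rainbow tree. *)

From mathcomp Require Import all_boot.
Set Implicit Arguments. Unset Strict Implicit. Unset Printing Implicit Defensive.

Definition simple_graph (T : finType) (e : rel T) : Prop :=
  symmetric e /\ irreflexive e.

Definition connected_graph (T : finType) (e : rel T) : Prop :=
  forall x y : T, connect e x y.

(* Subdividing the edge uw: the new vertex is None, old vertices are Some a. *)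
Definition subdivide (T : finType) (e : rel T) (u w : T) : rel (option T) :=
  fun x y =>
    match x, y with
    | Some a, Some b => e a b && ~~ (((a == u) && (b == w)) || ((a == w) && (b == u)))
    | Some a, None => (a == u) || (a == w)
    | None, Some b => (b == u) || (b == w)
    | None, None => false
    end.

Definition is_subtree (T : finType) (e : rel T) (V : {set T}) (f : rel T) : Prop :=
  [/\ (forall x y, f x y -> e x y),
      symmetric f,
      (forall x y, f x y -> x \in V),
      (forall x y, x \in V -> y \in V -> connect f x y) &
      (forall s : seq T, cycle f s -> uniq s -> 2 < size s -> False)].

(* Edge coloring c (only values on edges matter, required symmetric there);
   f is rainbow if distinct edges of f get distinct colors. *)
Definition rainbow (T : finType) (c : T -> T -> nat) (f : rel T) : Prop :=
  forall a b a' b', f a b -> f a' b' -> c a b = c a' b' ->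
    (a = a' /\ b = b') \/ (a = b' /\ b = a').

Definition rainbow3_coloring (T : finType) (e : rel T) (k : nat)
    (c : T -> T -> nat) : Prop :=
  [/\ (forall x y, e x y -> c x y < k),
      (forall x y, e x y -> c x y = c y x) &
      (forall S : {set T}, #|S| = 3 ->
         exists (V : {set T}) (f : rel T),
           [/\ is_subtree e V f, S \subset V & rainbow c f])].

Definition is_rx3 (T : finType) (e : rel T) (k : nat) : Prop :=
  (exists c, rainbow3_coloring e k c) /\
  (forall j, (exists c, rainbow3_coloring e j c) -> k <= j).

From mathcomp Require Import all_boot zify.
From Stdlib Require Import Classical.

(* Write x (encoded as None) for the new vertex of G'.  From a 3-rainbow
   colouring c of G with k colours we build one of G' with k + 1 colours: the
   edges of G other than uw keep their colour, xu gets the colour c(uw) and xw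
   gets the fresh colour k.  Given a triple S' of G', pick a triple S of G
   containing the old vertices of S' (and w as well when x is in S'), and a
   rainbow tree (V, f) of G through S.  Its lift to G' replaces the edge uw,
   if f uses it, by the path u - x - w, and otherwise hangs x off w when x is
   needed. *)

Set Implicit Arguments. Unset Strict Implicit. Unset Printing Implicit Defensive.

(* Lifting a subtree (V, f) of G to G'; addx says whether x must be covered
   too, which is only asked when w is in V. *)
Section LiftTree.
Variables (T : finType) (e : rel T) (u w : T).
Variables (V : {set T}) (f : rel T) (addx : bool).
Hypothesis tree : is_subtree e V f.
Hypothesis addx_w : addx -> w \in V.

Definition isuw (a b : T) : bool :=
  ((a == u) && (b == w)) || ((a == w) && (b == u)).

Definition kept : rel T := fun a b => f a b && ~~ isuw a b.

Definition new_adj (a : T) : bool :=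
  (f u w && ((a == u) || (a == w))) || (addx && ~~ f u w && (a == w)).

Definition lift_edges : rel (option T) := fun x y =>
  match x, y with
  | Some a, Some b => kept a b
  | Some a, None => new_adj a
  | None, Some b => new_adj b
  | None, None => false
  end.

Definition lift_verts : {set option T} :=
  Some @: V :|: (if f u w || addx then [set None] else set0).

Lemma lift_verts_old a : (Some a \in lift_verts) = (a \in V).
Proof.
rewrite in_setU mem_imset; last by move=> ? ? [].
by case: (f u w || addx); rewrite ?in_set1 ?in_set0 orbF.
Qed.

Lemma lift_verts_new : (None \in lift_verts) = (f u w || addx).
Proof.
rewrite in_setU; case: (f u w || addx); rewrite ?in_set1 ?in_set0 ?orbT ?orbF //.
by apply/imsetP => -[].
Qed.

Lemma new_adj_uw a : new_adj a -> (a == u) || (a == w).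
Proof. by rewrite /new_adj => /orP[/andP[_ ->]|/andP[_ /eqP ->]]; rewrite ?eqxx ?orbT. Qed.

Lemma lift_edges_sub x y : lift_edges x y -> subdivide e u w x y.
Proof.
case: tree => fe _ _ _ _.
by case: x y => [a|] [b|] //=; [move=> /andP[/fe -> ->]|exact: new_adj_uw|exact: new_adj_uw].
Qed.

Lemma lift_edges_sym : symmetric lift_edges.
Proof.
case: tree => _ fsym _ _ _.
move=> [a|] [b|] //=.
by rewrite /kept (fsym a b) /isuw orbC (andbC (b == u)) (andbC (b == w)).
Qed.

Lemma lift_edges_dom x y : lift_edges x y -> x \in lift_verts.
Proof.
case: tree => _ fsym fV _ _.
case: x y => [a|] [b|] //=; rewrite ?lift_verts_old ?lift_verts_new.
- by move=> /andP[/fV].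
- rewrite /new_adj => /orP[/andP[fuw]|/andP[/andP[/addx_w Hw _] /eqP ->]] //.
  by move=> /orP[]/eqP->; [apply: fV fuw|apply: (fV w u); rewrite fsym].
- by rewrite /new_adj => /orP[/andP[->]|/andP[/andP[->]]]; rewrite ?orbT.
Qed.

(* Connectivity transfers: each tree edge survives, except uw, which is
   replaced by the path u - x - w. *)
Lemma connect_lift a b : connect f a b -> connect lift_edges (Some a) (Some b).
Proof.
case: tree => _ fsym _ _ _.
have step x y : f x y -> connect lift_edges (Some x) (Some y).
  move=> fxy; case Hxy: (isuw x y); last by apply: connect1; rewrite /= /kept fxy Hxy.
  have fuw : f u w.
    by case/orP: Hxy fxy => /andP[/eqP -> /eqP ->] //; rewrite fsym.
  have u_new : new_adj u by rewrite /new_adj fuw eqxx.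
  have w_new : new_adj w by rewrite /new_adj fuw eqxx orbT.
  by case/orP: Hxy => /andP[/eqP -> /eqP ->];
    apply: (connect_trans (y := None)); apply: connect1.
move=> /connectP[p]; elim: p a => [|y p IH] a /=; first by move=> _ ->.
by move=> /andP[fay pp] Eb; apply: connect_trans (step _ _ fay) (IH _ pp Eb).
Qed.

Lemma new_has_neighbour :
  None \in lift_verts -> exists2 z, z \in V & new_adj z.
Proof.
case: tree => _ _ fV _ _.
rewrite lift_verts_new; case fuw: (f u w) => /= ax.
  by exists u; [apply: fV fuw|rewrite /new_adj fuw eqxx].
by exists w; [apply: addx_w|rewrite /new_adj ax fuw eqxx orbT].
Qed.

Lemma lift_edges_connected x y :
  x \in lift_verts -> y \in lift_verts -> connect lift_edges x y.
Proof.
case: tree => _ _ _ fcon _.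
case: x y => [a|] [b|]; rewrite ?lift_verts_old // => Ha Hb.
- by apply: connect_lift; apply: fcon.
- have [z Hz az] := new_has_neighbour Hb.
  have z_x : lift_edges (Some z) None := az.
  exact: connect_trans (connect_lift (fcon _ _ Ha Hz)) (connect1 z_x).
- have [z Hz az] := new_has_neighbour Ha.
  have x_z : lift_edges None (Some z) := az.
  exact: connect_trans (connect1 x_z) (connect_lift (fcon _ _ Hz Hb)).
Qed.

(* No kept path joins two distinct neighbours of x: if the tree used uw they
   are u and w and the path would close a cycle of f with uw; otherwise both
   ends would be w. *)
Lemma no_kept_path_between_new a t :
  new_adj a -> new_adj (last a t) -> path kept a t -> uniq (a :: t) ->
  0 < size t -> False.
Proof.
case: tree => _ fsym _ _ facyc.
move=> Ha Hl pt /andP[a_notin ut] st.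
have neq : a != last a t.
  apply: contraNneq a_notin => ->.
  by case/lastP: t {Hl pt ut} st => // t x _; rewrite last_rcons mem_rcons mem_head.
case fuw: (f u w); last first.
  move: Ha Hl neq; rewrite /new_adj fuw /= !andbT.
  by move=> /andP[_ /eqP ->] /andP[_ /eqP ->]; rewrite eqxx.
have uw_al : isuw a (last a t).
  move: (new_adj_uw Ha) (new_adj_uw Hl) neq; rewrite /isuw.
  by case/orP=> /eqP->; case/orP=> /eqP->; rewrite ?eqxx ?orbT.
have fla : f (last a t) a.
  by case/orP: uw_al => /andP[/eqP -> /eqP ->]; rewrite // fsym.
apply: (facyc (a :: t)).
- by rewrite /= rcons_path fla andbT (sub_path _ pt) // => x y /andP[].
- by rewrite /= a_notin.
- case: t {Ha Hl neq fla a_notin ut} pt st uw_al => [|b [|b' t]] //=.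
  by rewrite /kept => /andP[/andP[_ /negbTE ->]].
Qed.

(* A cycle of the lifted tree avoiding x is a cycle of f; one through x is
   excluded by no_kept_path_between_new. *)
Lemma lift_edges_acyclic (s : seq (option T)) :
  cycle lift_edges s -> uniq s -> 2 < size s -> False.
Proof.
case: tree => _ _ _ _ facyc.
have Some_inj' : injective (@Some T) := @Some_inj _.
have map_some (t : seq (option T)) : None \notin t -> map Some (pmap id t) = t.
  by elim: t => //= -[x|] t IH; rewrite in_cons => /norP[_ /IH] //= ->.
case: (boolP (None \in s)) => Hn; last first.
  rewrite -(map_some _ Hn) cycle_map (map_inj_uniq Some_inj') size_map => cs.
  by apply: facyc; apply: sub_cycle cs => a b /andP[].
case: (rot_to Hn) => i t Et.
rewrite -(rot_cycle i) -(rot_uniq i) -(size_rot i) Et /= => cs /andP[Nt ut] st.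
move: cs ut st; rewrite -(map_some _ Nt).
case: (pmap id t) => [|a t1] //=.
rewrite rcons_path path_map last_map (map_inj_uniq Some_inj') (mem_map Some_inj') size_map.
move=> /and3P[Ha pt1 Hl] /andP[a_notin ut1] st1.
by apply: (no_kept_path_between_new Ha Hl pt1); rewrite /= ?a_notin.
Qed.

Lemma lift_subtree : is_subtree (subdivide e u w) lift_verts lift_edges.
Proof.
split.
- exact: lift_edges_sub.
- exact: lift_edges_sym.
- exact: lift_edges_dom.
- exact: lift_edges_connected.
- exact: lift_edges_acyclic.
Qed.

End LiftTree.

Section LiftColoring.
Variables (T : finType) (e : rel T) (u w : T) (k : nat) (c : T -> T -> nat).
Hypothesis uw_neq : u != w.
Hypothesis euw : e u w.
Hypothesis c_lt : forall x y, e x y -> c x y < k.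

Definition new_color (a : T) : nat := if a == u then c u w else k.

(* The lifted colouring; the value on the non-edge xx is irrelevant. *)
Definition lift_color (x y : option T) : nat :=
  match x, y with
  | Some a, Some b => c a b
  | Some a, None | None, Some a => new_color a
  | None, None => 0
  end.

Variables (V : {set T}) (f : rel T) (addx : bool).
Hypothesis tree : is_subtree e V f.
Hypothesis rb : rainbow c f.

Lemma new_color_inj a a' :
  new_adj u w f addx a -> new_adj u w f addx a' -> new_color a = new_color a' -> a = a'.
Proof.
have cuw_lt := c_lt euw.
move=> /new_adj_uw Ha /new_adj_uw Ha'; rewrite /new_color.
case: (a =P u) Ha => [->|_] /= Ha; case: (a' =P u) Ha' => [->|_] /= Ha' //.
- by move=> E; rewrite E ltnn in cuw_lt.
- by move=> E; rewrite -E ltnn in cuw_lt.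
- by rewrite (eqP Ha) (eqP Ha').
Qed.

(* A kept edge never has the colour of an edge at the new vertex: the colour k
   is unused in G, and c u w is used in the tree only by uw, which is not kept. *)
Lemma kept_new_color a b a' :
  kept u w f a b -> new_adj u w f addx a' -> c a b <> new_color a'.
Proof.
case: tree => fe _ _ _ _.
move=> /andP[fab nuw] Ha'; rewrite /new_color.
case: (a' =P u) => [Eu|_] E; last by move: (c_lt (fe _ _ fab)); rewrite E ltnn.
have fuw : f u w.
  by move: Ha'; rewrite /new_adj Eu eqxx (negbTE uw_neq) !andbF orbF andbT.
by case: (rb fab fuw E) => -[Ea Eb]; move: nuw; rewrite /isuw Ea Eb !eqxx ?orbT.
Qed.

Lemma lift_rainbow : rainbow lift_color (lift_edges u w f addx).
Proof.
move=> [a|] [b|] [a'|] [b'|] //= H1 H2 E.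
all: first
  [ by case: (rb (andP H1).1 (andP H2).1 E) => -[-> ->]; [left|right]
  | by case: (kept_new_color H1 H2 E)
  | by case: (kept_new_color H2 H1 (esym E))
  | by left; rewrite (new_color_inj H1 H2 E)
  | by right; rewrite (new_color_inj H1 H2 E) ].
Qed.

End LiftColoring.

Definition old_part (T : finType) (A : {set option T}) : {set T} :=
  [set a | Some a \in A].

Lemma card_option_set (T : finType) (A : {set option T}) :
  #|A| = (None \in A) + #|old_part A|.
Proof.
have -> : old_part A = Some @^-1: A by apply/setP => a; rewrite !inE.
have img : Some @: (Some @^-1: A) = A :\ None.
  apply/setP => -[a|]; rewrite !inE /=; last by apply/imsetP => -[].
  by rewrite mem_imset ?inE // => ? ? [].
by rewrite (cardsD1 None A) -img (card_imset _ (@Some_inj _)).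
Qed.

Lemma extend_to_card (T : finType) (P : {set T}) (n : nat) :
  #|P| <= n -> n <= #|T| -> exists2 S : {set T}, #|S| = n & P \subset S.
Proof.
move=> hP hT; move eq_gap: (n - #|P|) => d.
elim: d P hP eq_gap => [|d IH] P hP eq_gap.
  by exists P => //; lia.
have /set0Pn[z] : ~: P != set0.
  by apply/eqP => P_full; have := cardsC P; rewrite P_full cards0; lia.
rewrite in_setC => zP.
have := cardsU1 z P; rewrite zP /= => card_zP.
have [S cardS sub] := IH (z |: P) ltac:(lia) ltac:(lia).
by exists S => //; apply: subset_trans sub; apply: subsetUr.
Qed.

Lemma trace_triple (T : finType) (w : T) (S' : {set option T}) :
  3 <= #|T| -> #|S'| = 3 ->
  exists2 S : {set T}, #|S| = 3 &
    old_part S' \subset S /\ (None \in S' -> w \in S).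
Proof.
move=> hT hS'.
pose Q : {set T} := if None \in S' then [set w] else set0.
have cardQ : #|Q| = nat_of_bool (None \in S').
  by rewrite /Q; case: (None \in S'); rewrite ?cards1 ?cards0.
have : #|old_part S' :|: Q| <= 3.
  by have := cardsUI (old_part S') Q; have := card_option_set S'; lia.
case/extend_to_card => // S cardS sub; exists S => //; split.
- by apply: subset_trans sub; apply: subsetUl.
- by move=> newS; apply: (subsetP sub); rewrite /Q newS !inE eqxx orbT.
Qed.

Lemma lift_rainbow3_coloring (T : finType) (e : rel T) (u w : T) (k : nat)
    (c : T -> T -> nat) :
  simple_graph e -> 3 <= #|T| -> e u w -> rainbow3_coloring e k c ->
  rainbow3_coloring (subdivide e u w) k.+1 (lift_color u w k c).
Proof.
move=> [e_sym e_irr] hT euw [c_lt c_sym c_trees].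
have uw_neq : u != w by apply: contraTneq euw => ->; rewrite e_irr.
split.
- have new_lt a : new_color u w k c a < k.+1.
    by rewrite /new_color; case: ifP => _ //; apply: ltnW (c_lt _ _ euw).
  case=> [a|] [b|] /=; last by [].
  + by case/andP=> /c_lt /ltnW.
  + by move=> _; apply: new_lt.
  + by move=> _; apply: new_lt.
- by move=> [a|] [b|] //= /andP[/c_sym].
move=> S' cardS'.
have [S /c_trees[V [f [tree sub_SV rb]]] [oldS newS]] := trace_triple w hT cardS'.
set addx := None \in S'.
have addx_w : addx -> w \in V by move=> /newS; apply: (subsetP sub_SV).
exists (lift_verts u w V f addx), (lift_edges u w f addx); split.
- exact: lift_subtree.
- apply/subsetP => -[a|] Ha; last by rewrite lift_verts_new /addx Ha orbT.
  by rewrite lift_verts_old (subsetP sub_SV) // (subsetP oldS) // inE.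
- exact: (lift_rainbow (addx := addx) uw_neq euw c_lt tree rb).
Qed.

(* Least number principle for an arbitrary (not necessarily decidable) property. *)
Lemma least_witness (P : nat -> Prop) (n : nat) :
  P n -> exists m, P m /\ forall j, P j -> m <= j.
Proof.
elim: n {-2}n (leqnn n) => [|N IH] n le_nN Pn.
  by exists n; split=> // j _; move: le_nN; rewrite leqn0 => /eqP ->.
case: (classic (exists2 j, j < n & P j)) => [[j lt_jn Pj]|no_smaller].
  by apply: (IH j) => //; lia.
exists n; split=> // j Pj; rewrite leqNgt; apply/negP => lt_jn.
by apply: no_smaller; exists j.
Qed.

Theorem corollary3 (T : finType) (e : rel T) (u w : T) (k : nat) :
  simple_graph e -> connected_graph e -> 3 <= #|T| -> e u w ->
  is_rx3 e k ->
  exists k', is_rx3 (subdivide e u w) k' /\ k' <= k + 1.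
Proof.
move=> G_simple _ hT euw [[c c_rx3] _].
have lifted := lift_rainbow3_coloring G_simple hT euw c_rx3.
have [m [[c' c'_rx3] m_least]] :=
  @least_witness (fun j => exists c, rainbow3_coloring (subdivide e u w) j c)
    k.+1 (ex_intro _ _ lifted).
exists m; split; first by split; [exists c'|].
by rewrite addn1; apply: m_least; exists (lift_color u w k c).
Qed.
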